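(* Let $X$ be a finite alphabet and let $M_1, M_2$ be monoids with monoid choices of generators $\sigma_1 : X^* \to M_1$ and $\sigma_2 : X^* \to M_2$. If $L_{\sigma_1}(M_1) = L_{\sigma_2}(M_2)$, then there is a monoid isomorphism $\rho : M_1 \to M_2$ such that $\sigma_1\rho = \sigma_2$ (i.e. $(w\sigma_1)\rho = w\sigma_2$ for all $w \in X^*$). The corresponding statement holds for semigroups $S_1, S_2$ with semigroup choices of generators $\sigma_1 : X^+ \to S_1$, $\sigma_2 : X^+ \to S_2$ (with a semigroup isomorphism $\rho$).
   Context: Maps are written on the right and composed left to right. $X^*$, $X^+$: free monoid and free semigroup on $X$. Let $\overline{X} = \{\overline{x} : x \in X\}$ be new symbols, $\hat{X} = X \cup \overline{X}$. For a monoid $M$ and surjective monoid morphism $\sigma : X^* \to M$, the loop automaton has vertex set $M$, for each $a \in M$, $x \in X$ an edge $a \to a(x\sigma)$ labelled $x$ and an edge $a(x\sigma) \to a$ labelled $\overline{x}$; the loop problem $L_\sigma(M) \subseteq \hat{X}^*$ is the set of labels of paths from the identity to the identity. For a semigroup $S$ and surjective morphism $\sigma : X^+ \to S$, $L_\sigma(S)$ is the loop problem of $S^1$ ($S$ with a new identity adjoined, even if one exists) with respect to the unique extension $\sigma^1 : X^* \to S^1$. *)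

From mathcomp Require Import all_boot.
Set Warnings "-notation-overridden".

Set Implicit Arguments. Unset Strict Implicit. Unset Printing Implicit Defensive.

Record monoid := Monoid {
  mcar :> Type;
  mmul : mcar -> mcar -> mcar;
  mone : mcar;
  mmulA : associative mmul;
  mmul1m : left_id mone mmul;
  mmulm1 : right_id mone mmul }.

Record semigroup := Semigroup {
  scar :> Type;
  smul : scar -> scar -> scar;
  smulA : associative smul }.

(* Words over X: X^* = seq X; X^+ = nonempty elements of seq X.
   hat X = X + X, with inl x = x and inr x = \overline{x}. *)

Definition monoid_choice (X : Type) (M : monoid) (sigma : seq X -> M) : Prop :=
  [/\ sigma [::] = @mone M,
      (forall u v, sigma (u ++ v) = @mmul M (sigma u) (sigma v))
    & (forall a : M, exists w, sigma w = a)].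

(* sigma : X^+ -> S is a surjective semigroup morphism
   (only its values on nonempty words matter) *)
Definition semigroup_choice (X : Type) (S : semigroup) (sigma : seq X -> S) : Prop :=
  (forall u v, u <> [::] -> v <> [::] -> sigma (u ++ v) = @smul S (sigma u) (sigma v))
  /\ (forall a : S, exists w, w <> [::] /\ sigma w = a).

(* Paths in the loop automaton: lpath a w b means there is a path from a to b
   labelled w. Edge a --x--> a(x sigma), edge a(x sigma) --xbar--> a. *)
Inductive lpath (X : Type) (M : monoid) (sigma : seq X -> M) :
    M -> seq (X + X) -> M -> Prop :=
| lpath_nil a : lpath sigma a [::] a
| lpath_fwd a x w b :
    lpath sigma (@mmul M a (sigma [:: x])) w b -> lpath sigma a (inl x :: w) b
| lpath_bwd a c x w b :
    @mmul M c (sigma [:: x]) = a -> lpath sigma c w b -> lpath sigma a (inr x :: w) b.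

Definition loop_problem (X : Type) (M : monoid) (sigma : seq X -> M)
  (w : seq (X + X)) : Prop := lpath sigma (@mone M) w (@mone M).

Definition adj1_mul (S : semigroup) (a b : option S) : option S :=
  match a, b with
  | None, _ => b
  | _, None => a
  | Some a, Some b => Some (@smul S a b)
  end.

Lemma adj1_mulA (S : semigroup) : associative (@adj1_mul S).
Proof. by case=> [a|] [b|] [c|] //=; rewrite smulA. Qed.
Lemma adj1_mul1m (S : semigroup) : left_id None (@adj1_mul S).
Proof. by case. Qed.
Lemma adj1_mulm1 (S : semigroup) : right_id None (@adj1_mul S).
Proof. by case. Qed.

Definition adjoin1 (S : semigroup) : monoid :=
  @Monoid (option S) (@adj1_mul S) None (@adj1_mulA S) (@adj1_mul1m S) (@adj1_mulm1 S).

Definition sigma1 (X : Type) (S : semigroup) (sigma : seq X -> S) : seq X -> adjoin1 S :=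
  fun w => match w with [::] => None | _ => Some (sigma w) end.

Definition sg_loop_problem (X : Type) (S : semigroup) (sigma : seq X -> S)
  (w : seq (X + X)) : Prop := loop_problem (sigma1 sigma) w.

(** The loop problem of a monoid choice of generators [s] determines the
    kernel of [s]: the word [u] followed by the barred reversal of [v] labels
    a loop at the identity exactly when [s u = s v], since reading [u] leads
    from [1] to [s u] and reading the barred letters leads from [s v] back to
    [1].  Two choices of generators with the same loop problem thus have the
    same kernel, so [s1 w |-> s2 w] is a well defined bijection, and it is a
    morphism because [s1] and [s2] are.  For semigroups the same argument runs
    in [S^1], on nonempty words. *)
From mathcomp Require Import all_boot.
From Stdlib Require Import ClassicalEpsilon.

Set Implicit Arguments. Unset Strict Implicit. Unset Printing Implicit Defensive.

Lemma factor_through_kernel (W A B : Type) (P : W -> Prop) (f : W -> A) (g : W -> B) :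
  (forall a, exists w, P w /\ f w = a) ->
  (forall u v, P u -> P v -> f u = f v -> g u = g v) ->
  exists h : A -> B, forall w, P w -> h (f w) = g w.
Proof.
move=> f_onto fg_ker.
pose pre a := proj1_sig (constructive_indefinite_description _ (f_onto a)).
have preP a : P (pre a) /\ f (pre a) = a.
  exact: proj2_sig (constructive_indefinite_description _ (f_onto a)).
exists (fun a => g (pre a)) => w Pw.
by have [Ppre fpre] := preP (f w); apply: fg_ker.
Qed.

Lemma bijection_of_same_kernel (W A B : Type) (P : W -> Prop) (f : W -> A) (g : W -> B) :
  (forall a, exists w, P w /\ f w = a) -> (forall b, exists w, P w /\ g w = b) ->
  (forall u v, P u -> P v -> f u = f v <-> g u = g v) ->
  exists h : A -> B, bijective h /\ forall w, P w -> h (f w) = g w.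
Proof.
move=> f_onto g_onto same_kernel.
have [h hE] := factor_through_kernel f_onto (fun u v Pu Pv => proj1 (same_kernel u v Pu Pv)).
have [k kE] := factor_through_kernel g_onto (fun u v Pu Pv => proj2 (same_kernel u v Pu Pv)).
exists h; split=> //; exists k.
- by move=> a; have [w [Pw <-]] := f_onto a; rewrite hE ?kE.
- by move=> b; have [w [Pw <-]] := g_onto b; rewrite kE ?hE.
Qed.

Section LoopProblemKernel.
Variables (X : Type) (M : monoid) (s : seq X -> M).
Hypotheses (s_nil : s [::] = mone M) (s_cat : forall u v, s (u ++ v) = mmul (s u) (s v)).

Lemma lpath_map_inl_cat u a w b :
  lpath s a (map inl u ++ w) b <-> lpath s (mmul a (s u)) w b.
Proof.
elim: u a => [|x u IH] a /=; first by rewrite s_nil mmulm1.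
rewrite (s_cat [:: x] u) mmulA -IH; split=> [H|]; last exact: lpath_fwd.
by inversion H.
Qed.

Lemma lpath_map_inr_rev v a b :
  lpath s a (map inr (rev v)) b <-> a = mmul b (s v).
Proof.
elim/last_ind: v a => [|v x IH] a /=.
  rewrite s_nil mmulm1; split=> [H|->]; last exact: lpath_nil.
  by inversion H.
rewrite rev_rcons /= -cats1 s_cat mmulA; split=> [H|->].
  by inversion H; subst; congr mmul; apply/IH.
by apply: (@lpath_bwd _ _ _ _ (mmul b (s v))) => //; apply/IH.
Qed.

Lemma loop_problem_kernelP u v :
  loop_problem s (map inl u ++ map inr (rev v)) <-> s u = s v.
Proof. by rewrite /loop_problem lpath_map_inl_cat lpath_map_inr_rev !mmul1m. Qed.

End LoopProblemKernel.

Lemma same_loop_problem_same_kernel (X : Type) (M1 M2 : monoid)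
    (s1 : seq X -> M1) (s2 : seq X -> M2) :
  monoid_choice s1 -> monoid_choice s2 ->
  (forall w, loop_problem s1 w <-> loop_problem s2 w) ->
  forall u v, s1 u = s1 v <-> s2 u = s2 v.
Proof.
move=> [s1_nil s1_cat _] [s2_nil s2_cat _] same_loops u v.
by rewrite -loop_problem_kernelP // same_loops loop_problem_kernelP.
Qed.

Lemma sigma1_choice (X : Type) (S : semigroup) (s : seq X -> S) :
  semigroup_choice s -> monoid_choice (sigma1 s).
Proof.
case=> s_cat s_onto; split=> //.
- by case=> [|x u] [|y v] //=; rewrite ?cats0 -?s_cat.
- case=> [a|]; last by exists [::].
  by have [[|x w] [w_nil <-]] := s_onto a; last by exists (x :: w).
Qed.

Lemma eq_sigma1 (X : Type) (S : semigroup) (s : seq X -> S) u v :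
  u <> [::] -> v <> [::] -> sigma1 s u = sigma1 s v <-> s u = s v.
Proof. by case: u => // x u _; case: v => // y v _; split=> [[]|/= ->]. Qed.

Lemma monoid_iso_of_same_loop_problem (X : Type) (M1 M2 : monoid)
    (s1 : seq X -> M1) (s2 : seq X -> M2) :
  monoid_choice s1 -> monoid_choice s2 ->
  (forall w, loop_problem s1 w <-> loop_problem s2 w) ->
  exists rho : M1 -> M2,
    [/\ bijective rho, rho (mone M1) = mone M2,
        (forall a b, rho (mmul a b) = mmul (rho a) (rho b))
      & (forall w, rho (s1 w) = s2 w)].
Proof.
move=> s1_choice s2_choice same_loops.
have [s1_nil s1_cat s1_onto] := s1_choice; have [s2_nil s2_cat s2_onto] := s2_choice.
have [||u v _ _|rho [rho_bij rhoE]] := @bijection_of_same_kernel _ _ _ xpredT s1 s2.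
- by move=> a; have [w <-] := s1_onto a; exists w.
- by move=> b; have [w <-] := s2_onto b; exists w.
- exact: same_loop_problem_same_kernel.
exists rho; split=> [||a b|w]; [done | by rewrite -s1_nil rhoE // s2_nil | | exact: rhoE].
by have [[u <-] [v <-]] := (s1_onto a, s1_onto b); rewrite -s1_cat !rhoE.
Qed.

Lemma semigroup_iso_of_same_loop_problem (X : Type) (S1 S2 : semigroup)
    (s1 : seq X -> S1) (s2 : seq X -> S2) :
  semigroup_choice s1 -> semigroup_choice s2 ->
  (forall w, sg_loop_problem s1 w <-> sg_loop_problem s2 w) ->
  exists rho : S1 -> S2,
    [/\ bijective rho, (forall a b, rho (smul a b) = smul (rho a) (rho b))
      & (forall w, w <> [::] -> rho (s1 w) = s2 w)].
Proof.
move=> s1_choice s2_choice same_loops.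
have [s1_cat s1_onto] := s1_choice; have [s2_cat s2_onto] := s2_choice.
have [u v u_nil v_nil|rho [rho_bij rhoE]] := bijection_of_same_kernel s1_onto s2_onto.
  rewrite -!eq_sigma1 //.
  exact: (same_loop_problem_same_kernel (sigma1_choice s1_choice)
            (sigma1_choice s2_choice) same_loops).
exists rho; split=> // a b.
have [[u [u_nil <-]] [v [v_nil <-]]] := (s1_onto a, s1_onto b).
by rewrite -s1_cat // !rhoE ?s2_cat //; case: u u_nil.
Qed.

Theorem corollary4p3 (X : finType) :
  (forall (M1 M2 : monoid) (s1 : seq X -> M1) (s2 : seq X -> M2),
     monoid_choice s1 -> monoid_choice s2 ->
     (forall w, loop_problem s1 w <-> loop_problem s2 w) ->
     exists rho : M1 -> M2,
       [/\ bijective rho, rho (@mone M1) = @mone M2,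
           (forall a b, rho (@mmul M1 a b) = @mmul M2 (rho a) (rho b))
         & (forall w, rho (s1 w) = s2 w)])
  /\
  (forall (S1 S2 : semigroup) (s1 : seq X -> S1) (s2 : seq X -> S2),
     semigroup_choice s1 -> semigroup_choice s2 ->
     (forall w, sg_loop_problem s1 w <-> sg_loop_problem s2 w) ->
     exists rho : S1 -> S2,
       [/\ bijective rho,
           (forall a b, rho (@smul S1 a b) = @smul S2 (rho a) (rho b))
         & (forall w, w <> [::] -> rho (s1 w) = s2 w)]).
Proof.
split; [exact: monoid_iso_of_same_loop_problem | exact: semigroup_iso_of_same_loop_problem].
Qed.
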